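(* For every integer $d\ge0$, the class $\mathcal T_d$ is a Baker class.
   Context: A layering of a graph $G$ is a function $\lambda:V(G)\to\mathbb{Z}$ with $|\lambda(u)-\lambda(v)|\le1$ for every edge $uv$. An ordered graph is a finite graph with a linear ordering of its vertices; subgraphs inherit the restricted ordering. For an infinite sequence $\mathbf r=r_1,r_2,\dots$ of positive integers and an integer $s\ge0$, let $\mathrm{tail}_s(\mathbf r)=r_{s+1},r_{s+2},\dots$, $\mathrm{tail}(\mathbf r)=\mathrm{tail}_1(\mathbf r)$ and $\mathrm{head}(\mathbf r)=r_1$. The Baker game between Destroyer and Preserver has states $(G,\mathbf r)$ with $G$ an ordered graph and $\mathbf r$ an infinite sequence of positive integers. If $V(G)=\emptyset$ the game stops. Otherwise, in one round Destroyer chooses either Delete (the smallest vertex $v$ of $G$ is removed and the game proceeds to $(G-v,\mathrm{tail}(\mathbf r))$) or Restrict (Destroyer chooses a layering $\lambda$ of $G$, Preserver chooses an interval $I$ of at most $\mathrm{head}(\mathbf r)$ consecutive integers, and the game proceeds to $(G[\lambda^{-1}(I)],\mathrm{tail}(\mathbf r))$). Destroyer wins on $(G,\mathbf r)$ in $t$ rounds if he has a strategy such that, regardless of Preserver's choices, the game stops after at most $t$ rounds. A class $\mathcal C$ of ordered graphs is a Baker class if for every infinite sequence $\mathbf r$ of positive integers there is an integer $t$ such that for every $G\in\mathcal C$, Destroyer wins the Baker game on $(G,\mathbf r)$ in $t$ rounds. An ordered graph $G$ is chordal if for every vertex $v$, the neighbors of $v$ smaller than $v$ induce a clique; the number of such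 neighbors is the left-degree of $v$. $\mathcal T_d$ denotes the class of chordal ordered graphs of maximum left-degree at most $d$. *)

From HB Require Import structures.
From mathcomp Require Import all_boot all_order all_algebra.
Set Implicit Arguments. Unset Strict Implicit. Unset Printing Implicit Defensive.
Import Order.TTheory GRing.Theory Num.Theory.

(* An ordered graph: vertex set 'I_n, linearly ordered by the natural order
   on 'I_n, with a symmetric irreflexive adjacency relation. *)
Record ograph := OGraph {
  og_n : nat;
  og_adj : rel 'I_og_n;
  og_sym : symmetric og_adj;
  og_irr : irreflexive og_adj
}.

(* Infinite sequences of positive integers are functions nat -> nat
   (r 0 = r_1); positivity is a hypothesis where needed. *)
Definition seq_head (r : nat -> nat) : nat := r 0%N.
Definition seq_tail (r : nat -> nat) : nat -> nat := fun i => r i.+1.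

(* Game states are induced subgraphs G[S] of the initial ordered graph G,
   represented by the vertex set S (with inherited order and adjacency). *)

Definition del_min (n : nat) (S : {set 'I_n}) : {set 'I_n} :=
  S :\: [set v in S | [forall u in S, (v <= u)%N]].

Definition is_layering (G : ograph) (S : {set 'I_(og_n G)})
  (lam : 'I_(og_n G) -> int) : Prop :=
  forall u v, u \in S -> v \in S -> og_adj (o:=G) u v -> (`|lam u - lam v| <= 1)%R.

Definition restrict_to (G : ograph) (S : {set 'I_(og_n G)})
  (lam : 'I_(og_n G) -> int) (a : int) (k : nat) : {set 'I_(og_n G)} :=
  [set v in S | ((a <= lam v) && (lam v < a + k%:Z))%R].

Fixpoint destroyer_wins (G : ograph) (t : nat) (S : {set 'I_(og_n G)})
  (r : nat -> nat) {struct t} : Prop :=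
  S = set0 \/
  match t with
  | 0 => False
  | t'.+1 =>
      destroyer_wins (G:=G) t' (del_min S) (seq_tail r)
      \/ exists lam : 'I_(og_n G) -> int,
           is_layering (G:=G) S lam /\
           forall (a : int) (k : nat), (k <= seq_head r)%N ->
             destroyer_wins (G:=G) t' (restrict_to (G:=G) S lam a k) (seq_tail r)
  end.

Definition baker_class (C : ograph -> Prop) : Prop :=
  forall r : nat -> nat, (forall i, (0 < r i)%N) ->
  exists t : nat, forall G : ograph, C G -> destroyer_wins (G:=G) t [set: 'I_(og_n G)] r.

Definition left_nbr (G : ograph) (v u : 'I_(og_n G)) : bool :=
  og_adj (o:=G) v u && (u < v)%N.

Definition chordal (G : ograph) : Prop :=
  forall v u w : 'I_(og_n G),
    left_nbr v u -> left_nbr v w -> u != w -> og_adj (o:=G) u w.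

Definition left_degree (G : ograph) (v : 'I_(og_n G)) : nat :=
  #|[set u | left_nbr (G:=G) v u]|.

Definition class_T (d : nat) (G : ograph) : Prop :=
  chordal G /\ forall v, (left_degree (G:=G) v <= d)%N.

From mathcomp Require Import all_boot all_order all_algebra zify.
Set Implicit Arguments. Unset Strict Implicit. Unset Printing Implicit Defensive.
Import Order.TTheory GRing.Theory Num.Theory.

(* Game states are vertex sets S of a fixed ordered graph, and we show
   by induction on d that on every chordal state of left-degree at most d
   Destroyer wins within a number of rounds depending only on r (deg_wins).
   - d = 0: there are no edges, so the vertex index is a layering and Preserver
     keeps a window of at most head r vertices, removed by deletions.
   - d -> d+1: Destroyer restricts along a breadth-first layering
     (bfs_layering), which is graded (left neighbours lie in the same or the
     previous layer) and anchored (a vertex with d+1 left neighbours has one in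
     the previous layer).  This leaves a banded state on k <= head r layers,
     handled by induction on k (band_wins).  Its bottom layer has left-degree
     at most d, and a strategy for the bottom layer is simulated on the whole
     state (section Simulation): the part attached to the bottom layer through
     left neighbours (attachment, built by recursion along the vertex order)
     is split off from the rest, which uses only k layers, and on it the
     bottom moves are copied. *)

Definition shift (s : nat) (r : nat -> nat) : nat -> nat := fun i => r (s + i).

Lemma tail_shift s r i : seq_tail (shift s r) i = shift s.+1 r i.
Proof. by rewrite /seq_tail /shift addSnnS. Qed.

Lemma wins_ext (G : ograph) t (S : {set 'I_(og_n G)}) r r' :
  r =1 r' -> destroyer_wins t S r -> destroyer_wins t S r'.
Proof.
elim: t S r r' => [|t IH] S r r' Er /=; first by case=> // ->; left.
have Etail : seq_tail r =1 seq_tail r' by move=> i; apply: Er.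
case=> [->|[Hdel|[lam [Hlam Hwin]]]]; first by left.
- by right; left; apply: IH Hdel.
- right; right; exists lam; split=> // a k Hk.
  by apply: IH (Hwin a k _) => //; rewrite /seq_head Er.
Qed.

Lemma wins_mono (G : ograph) t t' (S : {set 'I_(og_n G)}) r :
  (t <= t')%N -> destroyer_wins t S r -> destroyer_wins t' S r.
Proof.
elim: t t' S r => [|t IH] [|t'] S r Htt' //=; first by case=> // ->; left.
case=> [->|[Hdel|[lam [Hlam Hwin]]]]; first by left.
- by right; left; apply: IH Hdel.
- by right; right; exists lam; split=> // a k Hk; apply: IH (Hwin a k Hk).
Qed.

Lemma del_min_sub n (S : {set 'I_n}) : del_min S \subset S.
Proof. exact: subsetDl. Qed.

Lemma restrict_sub (G : ograph) (S : {set 'I_(og_n G)}) lam a k :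
  restrict_to S lam a k \subset S.
Proof. by apply/subsetP => v; rewrite inE => /andP[]. Qed.

Lemma del_min_mono n (S S' : {set 'I_n}) :
  S' \subset S -> del_min S' \subset del_min S.
Proof.
move=> /subsetP sub; apply/subsetP=> v; rewrite /del_min !inE => /andP[Hmin Hv].
rewrite (sub v Hv) andbT; move: Hmin; rewrite Hv /=.
by apply: contra => /forall_inP Hm; apply/forall_inP => u Hu; apply: Hm (sub u Hu).
Qed.

Lemma wins_sub (G : ograph) t (S S' : {set 'I_(og_n G)}) r :
  S' \subset S -> destroyer_wins t S r -> destroyer_wins t S' r.
Proof.
elim: t S S' r => [|t IH] S S' r sub.
  by case=> // E; left; apply/eqP; rewrite -subset0 -E.
case=> [E|[Hdel|[lam [Hlam Hwin]]]]; first by left; apply/eqP; rewrite -subset0 -E.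
- by right; left; apply: IH Hdel; apply: del_min_mono.
- right; right; exists lam; split=> [u v Hu Hv|a k Hk].
    by apply: Hlam; apply: (subsetP sub).
  apply: IH (Hwin a k Hk); apply/subsetP => v; rewrite !inE => /andP[Hv ->].
  by rewrite (subsetP sub v Hv).
Qed.

Lemma wins_delete (G : ograph) t (S : {set 'I_(og_n G)}) r :
  destroyer_wins t (del_min S) (seq_tail r) -> destroyer_wins t.+1 S r.
Proof. by right; left. Qed.

Lemma wins_restrict (G : ograph) t (S : {set 'I_(og_n G)}) r lam :
  is_layering S lam ->
  (forall a k, (k <= seq_head r)%N ->
     destroyer_wins t (restrict_to S lam a k) (seq_tail r)) ->
  destroyer_wins t.+1 S r.
Proof. by move=> Hlam Hwin; right; right; exists lam. Qed.

Lemma wins_window (G : ograph) k (b : int) (S : {set 'I_(og_n G)}) r :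
  (forall v, v \in S -> (b <= (v : nat)%:Z < b + k%:Z)%R) -> destroyer_wins k S r.
Proof.
elim: k b S r => [|k IH] b S r Hwin /=.
  by left; apply/setP => v; rewrite inE; apply/negP => /Hwin; lia.
right; left; apply: (IH (b + 1)%R) => v; rewrite /del_min !inE => /andP[Hnmin Hv].
move: Hnmin; rewrite Hv /= negb_forall_in => /existsP[u /andP[Hu]].
by rewrite -ltnNge => Huv; have := Hwin u Hu; have := Hwin v Hv; lia.
Qed.

(* If no edge of G[S] joins a part to the rest, Destroyer spends one round
   to confine the game to one of the two sides: he layers the part at
   0 and the rest at head r + 1, too far apart for a single interval. *)
Lemma wins_split (G : ograph) t (S : {set 'I_(og_n G)}) (part : 'I_(og_n G) -> bool) r :
  (forall u v, u \in S -> v \in S -> og_adj u v -> part u = part v) ->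
  destroyer_wins t [set v in S | part v] (seq_tail r) ->
  destroyer_wins t [set v in S | ~~ part v] (seq_tail r) ->
  destroyer_wins t.+1 S r.
Proof.
move=> Hpart Hin Hout.
apply: (wins_restrict (lam := fun v => if part v then 0%R else Posz (seq_head r).+1)).
  by move=> u v Hu Hv /(Hpart u v Hu Hv) ->; rewrite subrr normr0.
move=> b k Hk; have [Hb|Hb] := boolP ((b <= 0) && (0 < b + k%:Z))%R.
- apply: wins_sub Hin; apply/subsetP => v; rewrite !inE => /andP[-> /=].
  by case: (part v) => //; move: Hb => /andP[]; lia.
- apply: wins_sub Hout; apply/subsetP => v; rewrite !inE => /andP[-> /=].
  by case: (part v) => // Hbb; move: Hb; rewrite Hbb.
Qed.

Lemma uniform_bound (P : nat -> nat -> Prop) :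
  (forall s t t', P s t -> (t <= t')%N -> P s t') -> (forall s, exists t, P s t) ->
  forall N, exists t, forall s, (s <= N)%N -> P s t.
Proof.
move=> Pmono Pex; elim=> [|N [t IH]].
  by have [t Ht] := Pex 0%N; exists t => s; rewrite leqn0 => /eqP ->.
have [t' Ht'] := Pex N.+1; exists (maxn t t') => s; rewrite leq_eqVlt ltnS.
case/orP => [/eqP ->|Hs]; first by apply: Pmono Ht' (leq_maxr _ _).
by apply: Pmono (IH s Hs) (leq_maxl _ _).
Qed.

(* Functions on 'I_n defined by recursion along the vertex order: if the
   property P f v only depends on f below v, and a value at v satisfying P can
   always be chosen once P holds below v, then some f satisfies P everywhere. *)
Lemma ordered_construction n (T : Type) (x0 : T) (P : ('I_n -> T) -> 'I_n -> Prop) :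
  (forall (f g : 'I_n -> T) (v : 'I_n), (forall u : 'I_n, (u <= v)%N -> f u = g u) ->
     P f v -> P g v) ->
  (forall (f : 'I_n -> T) (v : 'I_n), (forall u : 'I_n, (u < v)%N -> P f u) ->
     exists x, P (fun u => if (u < v)%N then f u else x) v) ->
  exists f, forall v, P f v.
Proof.
move=> Plocal Pstep.
suff /(_ n (leqnn n)) [f Hf] :
    forall m, (m <= n)%N -> exists f, forall v : 'I_n, (v < m)%N -> P f v.
  by exists f => v; apply: Hf (ltn_ord v).
elim=> [|m IH] Hm; first by exists (fun _ => x0).
have [f Hf] := IH (ltnW Hm); pose vm := Ordinal Hm.
have [x Hx] := Pstep f vm Hf.
exists (fun u : 'I_n => if (u < vm)%N then f u else x) => v; rewrite ltnS leq_eqVlt.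
case/orP => [/eqP Ev|Hv]; first by have -> : v = vm by apply: val_inj.
by apply: Plocal (Hf v Hv) => u Huv; rewrite (leq_ltn_trans Huv Hv).
Qed.

Definition left_nbrs (G : ograph) (S : {set 'I_(og_n G)}) (v : 'I_(og_n G)) :
  {set 'I_(og_n G)} := [set u in S | left_nbr v u].

Lemma left_nbr_lt (G : ograph) (v u : 'I_(og_n G)) : left_nbr v u -> (u < v)%N.
Proof. by case/andP. Qed.

Lemma left_nbrs_sub (G : ograph) (S S' : {set 'I_(og_n G)}) v :
  S' \subset S -> left_nbrs S' v \subset left_nbrs S v.
Proof.
by move=> /subsetP sub; apply/subsetP => u; rewrite !inE => /andP[/sub -> ->].
Qed.

Lemma adj_left_nbr (G : ograph) (u v : 'I_(og_n G)) :
  og_adj u v -> left_nbr v u \/ left_nbr u v.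
Proof.
move=> Huv; rewrite /left_nbr Huv (og_sym v u) Huv /=.
case: (ltngtP u v) => [||Euv]; [by left|by right|].
by move: Huv; rewrite (val_inj Euv) og_irr.
Qed.

Lemma chordal_left_nbrs (G : ograph) (v u w : 'I_(og_n G)) : chordal G ->
  left_nbr v u -> left_nbr v w -> u != w -> left_nbr u w \/ left_nbr w u.
Proof. by move=> HG Hu Hw Huw; apply/or_comm/adj_left_nbr/(HG v). Qed.

Definition left_graded (G : ograph) (S : {set 'I_(og_n G)})
  (lam : 'I_(og_n G) -> int) : Prop :=
  forall u v, u \in S -> v \in S -> left_nbr v u -> (lam u <= lam v <= lam u + 1)%R.

Lemma left_graded_layering (G : ograph) (S : {set 'I_(og_n G)}) lam :
  left_graded S lam -> is_layering S lam.
Proof.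
move=> Hlam u v Hu Hv /adj_left_nbr[Hl|Hl].
- by have := Hlam u v Hu Hv Hl; lia.
- by have := Hlam v u Hv Hu Hl; lia.
Qed.

(* Breadth-first layering of a chordal graph along the vertex order: a vertex
   without left neighbours gets layer 0, any other vertex one more than its
   smallest left neighbour u1.  Every other left neighbour u of v has u1 as a
   left neighbour (chordality), so its layer is that of u1 or one more. *)
Lemma bfs_layering (G : ograph) (S : {set 'I_(og_n G)}) : chordal G ->
  exists lam : 'I_(og_n G) -> int, left_graded S lam /\
    forall v, v \in S -> left_nbrs S v != set0 ->
      exists2 u, u \in left_nbrs S v & (lam u + 1 = lam v)%R.
Proof.
move=> HG.
pose P (lam : 'I_(og_n G) -> int) v := v \in S ->
  (forall u, u \in S -> left_nbr v u -> (lam u <= lam v <= lam u + 1)%R) /\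
  (left_nbrs S v != set0 -> exists2 u, u \in left_nbrs S v & (lam u + 1 = lam v)%R).
suff [lam Hlam] : exists lam, forall v, P lam v.
  exists lam; split=> [u v Hu Hv|v Hv]; first exact: (Hlam v Hv).1.
  exact: (Hlam v Hv).2.
apply: (ordered_construction 0%R).
  move=> f g v Efg Hf /Hf[Hgraded Hanchor].
  have El u : left_nbr v u -> f u = g u by move=> Hl; apply/Efg/ltnW/left_nbr_lt.
  rewrite /P -Efg //; split=> [u Hu Hl|/Hanchor[u Hu Hl]].
    by rewrite -El //; apply: Hgraded.
  by move: (Hu); rewrite inE => /andP[_ Hlu]; exists u; rewrite // -El.
move=> f v IH; have [E|[u0 Hu0]] := set_0Vmem (left_nbrs S v).
  exists 0%R => Hv; rewrite ltnn E eqxx; split=> // u Hu Hl.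
  have : u \in left_nbrs S v by rewrite inE Hu Hl.
  by rewrite E inE.
case: (@arg_minnP _ u0 (fun u => u \in left_nbrs S v) val Hu0) => u1 Hu1 Hmin.
move: (Hu1); rewrite /= inE => /andP[Hu1S Hl1].
exists (f u1 + 1)%R => Hv; rewrite ltnn.
split=> [u Hu Hl|_]; last by exists u1; rewrite ?(left_nbr_lt Hl1).
rewrite (left_nbr_lt Hl) lerD2r.
have [->|Nu] := eqVneq u u1; first by rewrite lexx; lia.
have Hu1u : left_nbr u u1.
  have [//|Hu1u] := chordal_left_nbrs HG Hl Hl1 Nu.
  by have := Hmin u; rewrite inE Hu Hl leqNgt (left_nbr_lt Hu1u) => /(_ isT).
by have := (IH u (left_nbr_lt Hl) Hu).1 u1 Hu1S Hu1u; lia.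
Qed.

Definition deg_le (G : ograph) (d : nat) (S : {set 'I_(og_n G)}) : Prop :=
  forall v, v \in S -> (#|left_nbrs S v| <= d)%N.

Definition anchored (G : ograph) (d : nat) (S : {set 'I_(og_n G)})
  (lam : 'I_(og_n G) -> int) : Prop :=
  forall v, v \in S -> (d <= #|left_nbrs S v|)%N ->
    exists2 u, u \in left_nbrs S v & (lam u + 1 = lam v)%R.

Definition graded (G : ograph) (d : nat) (S : {set 'I_(og_n G)})
  (lam : 'I_(og_n G) -> int) : Prop :=
  [/\ left_graded S lam, deg_le d S & anchored d S lam].

(* The invariant of the inner induction: a graded layering using only the k
   layers a, ..., a+k-1. *)
Definition banded (G : ograph) (d : nat) (S : {set 'I_(og_n G)})
  (lam : 'I_(og_n G) -> int) (a : int) (k : nat) : Prop :=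
  graded d S lam /\ forall v, v \in S -> (a <= lam v < a + k%:Z)%R.

Definition bottom (G : ograph) (S : {set 'I_(og_n G)}) (lam : 'I_(og_n G) -> int)
  (a : int) : {set 'I_(og_n G)} := [set v in S | lam v == a].

(* Gradedness passes to a subset S' of S; for anchoring note that a vertex
   with d left neighbours in S' has the same (at most d) left neighbours in S. *)
Lemma graded_sub (G : ograph) d (S S' : {set 'I_(og_n G)}) lam :
  S' \subset S -> graded d S lam -> graded d S' lam.
Proof.
move=> sub [Hgr Hdeg Hanc]; have inS := subsetP sub.
have le_nbrs v : (#|left_nbrs S' v| <= #|left_nbrs S v|)%N.
  exact/subset_leq_card/left_nbrs_sub.
split=> [u v /inS Hu /inS Hv|v Hv|v Hv Hd]; first exact: Hgr.
  exact: leq_trans (le_nbrs v) (Hdeg v (inS v Hv)).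
have E : left_nbrs S' v = left_nbrs S v.
  apply/eqP; rewrite eqEcard left_nbrs_sub //=.
  exact: leq_trans (Hdeg v (inS v Hv)) Hd.
by rewrite E; apply: Hanc (inS v Hv) _; rewrite -E.
Qed.

Section Banded.

Variables (G : ograph) (d : nat) (lam : 'I_(og_n G) -> int) (a : int) (k : nat).
Implicit Types (S : {set 'I_(og_n G)}).

Lemma banded_sub S S' : S' \subset S -> banded d S lam a k -> banded d S' lam a k.
Proof.
move=> sub [Hgraded Hrange]; split; first exact: graded_sub Hgraded.
by move=> v /(subsetP sub); apply: Hrange.
Qed.

Lemma banded_raise S : banded d S lam a k.+1 -> bottom S lam a = set0 ->
  banded d S lam (a + 1) k.
Proof.
move=> [Hgraded Hrange] E; split=> // v Hv.
have : v \notin bottom S lam a by rewrite E inE.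
by rewrite inE Hv /= => /eqP; have := Hrange v Hv; lia.
Qed.

Lemma bottom_left_closed S u v : banded d S lam a k ->
  u \in S -> v \in bottom S lam a -> left_nbr v u -> u \in bottom S lam a.
Proof.
move=> [[Hgr _ _] Hrange] Hu; rewrite !inE Hu => /andP[Hv /eqP Ev] Hl.
by have := Hgr u v Hu Hv Hl; have := Hrange u Hu; lia.
Qed.

End Banded.

(* A bottom vertex has no left neighbour in the layer below, so by anchoring
   the bottom layer has left-degree one less than the whole state. *)
Lemma bottom_deg (G : ograph) d (S : {set 'I_(og_n G)}) lam a k :
  banded d.+1 S lam a k -> deg_le d (bottom S lam a).
Proof.
move=> [[_ Hdeg Hanc] Hrange] v; rewrite inE => /andP[Hv /eqP Ev].
have sub : left_nbrs (bottom S lam a) v \subset left_nbrs S v.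
  by apply: left_nbrs_sub; apply/subsetP => w; rewrite inE => /andP[].
rewrite leqNgt; apply/negP => /leq_trans/(_ (subset_leq_card sub)) Hd.
have [u] := Hanc v Hv Hd; rewrite inE => /andP[Hu _].
by have := Hrange u Hu; lia.
Qed.

Lemma filter_superset n (S T : {set 'I_n}) (q : pred 'I_n) :
  T \subset S -> (forall v, v \in S -> q v -> v \in T) ->
  [set v in T | q v] = [set v in S | q v].
Proof.
move=> /subsetP sub HqT; apply/setP => v; rewrite !inE.
by apply/andP/andP => [[/sub]|[/HqT]] Hv Hq; split=> //; apply: Hv.
Qed.

(* If every vertex of T outside q lies above some vertex of T in q, the
   smallest vertex of T is in q, so deleting it commutes with filtering. *)
Lemma filter_del_min n (T : {set 'I_n}) (q : pred 'I_n) :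
  (forall u, u \in T -> ~~ q u -> exists2 x, x \in T & q x && (x < u)%N) ->
  [set v in del_min T | q v] = del_min [set v in T | q v].
Proof.
move=> Hbelow; apply/setP => v; rewrite /del_min !inE.
have [HvT|] := boolP (v \in T); last by rewrite !andbF.
have [Hqv|] := boolP (q v); rewrite ?andbF ?andbT //=; congr negb.
apply/forall_inP/forall_inP => Hmin u; first by rewrite inE => /andP[/Hmin].
move=> Hu; have [Hqu|/(Hbelow u Hu)[x Hx /andP[Hqx Hxu]]] := boolP (q u).
  by apply: Hmin; rewrite inE Hu.
by apply: leq_trans (ltnW Hxu); apply: Hmin; rewrite inE Hx.
Qed.

Lemma filter_restrict (G : ograph) (T : {set 'I_(og_n G)}) (q : pred 'I_(og_n G))
  (ext mu : 'I_(og_n G) -> int) b k :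
  (forall v, v \in T -> q v -> ext v = mu v) ->
  [set v in restrict_to T ext b k | q v] = restrict_to [set v in T | q v] mu b k.
Proof.
move=> Eq; apply/setP => v; rewrite /restrict_to !inE.
by case HvT: (v \in T) => //=; case Hqv: (q v); rewrite ?andbF ?andbT // Eq.
Qed.

(* Attaching a vertex set S to a part B closed under left neighbours: every
   vertex of S gets a type (attached to B or not) and an extension of a
   layering mu of B.
   Vertices are treated in order: a vertex of B keeps mu, a vertex without
   left neighbours is unattached, and any other vertex copies the values of
   one of its left neighbours; chordality makes this consistent. *)
Section Attachment.

Variables (G : ograph) (S B : {set 'I_(og_n G)}) (mu : 'I_(og_n G) -> int).
Hypotheses (HG : chordal G)
  (B_closed : forall u v, u \in S -> v \in B -> left_nbr v u -> u \in B)
  (mu_layering : is_layering B mu).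

Let attached_at (typ : 'I_(og_n G) -> bool) (ext : 'I_(og_n G) -> int) v : Prop :=
  v \in S -> [/\ v \in B -> typ v /\ ext v = mu v,
    forall u, u \in S -> left_nbr v u -> typ u = typ v /\ (`|ext u - ext v| <= 1)%R
  & v \notin B -> typ v -> exists2 x, x \in B & (x < v)%N].

Lemma attachment :
  exists (typ : 'I_(og_n G) -> bool) (ext : 'I_(og_n G) -> int), [/\
  forall v, v \in S -> v \in B -> typ v /\ ext v = mu v,
  forall u v, u \in S -> v \in S -> og_adj u v ->
    typ u = typ v /\ (`|ext u - ext v| <= 1)%R
  & forall v, v \in S -> v \notin B -> typ v -> exists2 x, x \in B & (x < v)%N].
Proof.
pose P (f : 'I_(og_n G) -> bool * int) := attached_at (fun u => (f u).1) (fun u => (f u).2).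
suff [f Hf] : exists f, forall v, P f v.
  exists (fun u => (f u).1), (fun u => (f u).2); split=> [v /Hf[]//|u v Hu Hv|v /Hf[]//].
  case/adj_left_nbr=> Hl; first by have [_ /(_ u Hu Hl)] := Hf v Hv.
  by have [_ /(_ v Hv Hl)[-> ?]] := Hf u Hu; rewrite distrC.
apply: (ordered_construction (true, 0%R)).
  move=> f g v Efg Hf /Hf[C1 C2 C3]; have Ev := Efg v (leqnn v).
  have El u : left_nbr v u -> f u = g u by move=> Hl; apply/Efg/ltnW/left_nbr_lt.
  by split=> [|u Hu Hl|]; rewrite /= -Ev // -El //; apply: C2.
move=> f v IH; have IHl u : u \in S -> left_nbr v u -> P f u.
  by move=> Hu Hl; apply: IH (left_nbr_lt Hl).
have [HvB|HvB] := boolP (v \in B).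
  exists (true, mu v) => Hv; rewrite /= ltnn; split=> [//|u Hu Hl|]; last by rewrite HvB.
  rewrite (left_nbr_lt Hl).
  have HuB := B_closed Hu HvB Hl; have [/(_ HuB)[-> ->] _ _] := IHl u Hu Hl Hu.
  by split=> //; apply: mu_layering => //; rewrite og_sym; case/andP: Hl.
have [E|[u0 Hu0]] := set_0Vmem (left_nbrs S v).
  exists (false, 0%R) => Hv; rewrite /= ltnn (negbTE HvB); split=> // u Hu Hl.
  have : u \in left_nbrs S v by rewrite inE Hu Hl.
  by rewrite E inE.
move: (Hu0); rewrite inE => /andP[Hu0S Hl0].
exists (f u0) => Hv; rewrite /= ltnn (negbTE HvB); split=> [//|u Hu Hl|_ Ht].
  rewrite (left_nbr_lt Hl); have [->|Nu] := eqVneq u u0; first by rewrite subrr.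
  case: (chordal_left_nbrs HG Hl Hl0 Nu) => Hl'.
    by have [_ /(_ u0 Hu0S Hl')[-> ?] _] := IHl u Hu Hl Hu; rewrite distrC.
  by have [_ /(_ u Hu Hl') //] := IHl u0 Hu0S Hl0 Hu0S.
have [Hu0B|Hu0B] := boolP (u0 \in B); first by exists u0 => //; apply: left_nbr_lt.
have [_ _ /(_ Hu0B Ht)[x Hx Hxu0]] := IHl u0 Hu0S Hl0 Hu0S.
by exists x => //; apply: ltn_trans Hxu0 (left_nbr_lt Hl0).
Qed.

End Attachment.

Definition deg_wins (d : nat) : Prop :=
  forall r : nat -> nat, exists t, forall G : ograph, chordal G ->
  forall S : {set 'I_(og_n G)}, deg_le d S -> destroyer_wins t S r.

Definition band_wins (d k : nat) : Prop :=
  forall r : nat -> nat, exists t, forall G : ograph, chordal G ->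
  forall (S : {set 'I_(og_n G)}) lam a, banded d S lam a k -> destroyer_wins t S r.

(* Left-degree 0 means no edges: any function, e.g. the vertex index, is a
   layering, and the chosen window of at most head r indices is deleted. *)
Lemma deg_wins0 : deg_wins 0.
Proof.
move=> r; exists (seq_head r).+1 => G _ S Hdeg.
apply: (wins_restrict (lam := fun v => Posz v)) => [u v Hu Hv Huv|b k Hk].
  exfalso; have [Hl|Hl] := adj_left_nbr Huv.
  - by have := Hdeg v Hv; rewrite leqn0 cards_eq0 => /eqP/setP/(_ u); rewrite !inE Hu Hl.
  - by have := Hdeg u Hu; rewrite leqn0 cards_eq0 => /eqP/setP/(_ v); rewrite !inE Hv Hl.
apply: wins_mono Hk _; apply: (wins_window (b := b)) => v.
by rewrite inE => /andP[].
Qed.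

Lemma band_wins0 d : band_wins d 0.
Proof.
move=> r; exists 0%N => G _ S lam a [_ Hrange]; left.
by apply/setP => v; rewrite inE; apply/negP => /Hrange; lia.
Qed.

(* The entries of r used in the odd rounds, where the simulated moves occur. *)
Definition odd_entries (r : nat -> nat) : nat -> nat := fun i => r (2 * i).+1.

Lemma tail2_shift p r : seq_tail (seq_tail (shift (2 * p) r)) =1 shift (2 * p.+1) r.
Proof. by move=> i; rewrite /seq_tail /shift; congr r; lia. Qed.

(* Destroyer plays on a banded state S with k+1
   layers; a strategy winning in tA rounds on the bottom layer (of smaller
   left-degree) for the sequence of odd entries of r is simulated, one bottom
   round per two rounds: first Destroyer separates the part attached to the
   bottom layer from the rest (which avoids layer a and is won in tB rounds by
   the hypothesis on k layers), then he copies the bottom move on the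
   attached part. *)
Section Simulation.

Variables (d k : nat) (r : nat -> nat) (tA tB : nat).
Variables (G : ograph) (lam : 'I_(og_n G) -> int) (a : int).
Hypothesis HG : chordal G.
Hypothesis upper_wins : forall s (S : {set 'I_(og_n G)}), (s <= 2 * tA + 1)%N ->
  banded d.+1 S lam (a + 1) k -> destroyer_wins tB S (shift s r).

Implicit Types (S : {set 'I_(og_n G)}).

(* Destroyer's separation round, for the move mu to be copied (mu is an
   arbitrary layering for a deletion): the attached part T is not joined by
   edges to the rest, the rest is banded on the k layers above a, ext is a
   layering of T, and deleting from or restricting T along ext acts on the
   bottom layer exactly as the copied bottom move. *)
Lemma attached_split S mu : banded d.+1 S lam a k.+1 -> is_layering (bottom S lam a) mu ->
  exists (typ : 'I_(og_n G) -> bool) (ext : 'I_(og_n G) -> int), [/\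
    forall u v, u \in S -> v \in S -> og_adj u v -> typ u = typ v,
    banded d.+1 [set v in S | ~~ typ v] lam (a + 1) k,
    is_layering [set v in S | typ v] ext,
    bottom (del_min [set v in S | typ v]) lam a = del_min (bottom S lam a)
  & forall b k', bottom (restrict_to [set v in S | typ v] ext b k') lam a
                 = restrict_to (bottom S lam a) mu b k'].
Proof.
move=> HS Hmu; have [typ [ext [Hin Hedge Hbelow]]] :=
  attachment HG (fun u v => bottom_left_closed HS) Hmu.
pose T := [set v in S | typ v]; have subT : T \subset S.
  by apply/subsetP => v; rewrite inE => /andP[].
have botT : bottom T lam a = bottom S lam a.
  apply: filter_superset subT _ => v Hv Ha.
  by rewrite inE Hv; apply: (Hin v Hv _).1; rewrite inE Hv.
exists typ, ext; split.
- by move=> u v Hu Hv /(Hedge u v Hu Hv)[].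
- apply: banded_raise.
    by apply: banded_sub HS; apply/subsetP => v; rewrite inE => /andP[].
  apply/setP => v; rewrite !inE; apply/negbTE/negP => /andP[/andP[Hv Ht] Ha].
  by move: Ht; rewrite (Hin v Hv _).1 // inE Hv Ha.
- by move=> u v; rewrite !inE => /andP[Hu _] /andP[Hv _] /(Hedge u v Hu Hv)[].
- rewrite -botT; apply: filter_del_min => u; rewrite inE => /andP[Hu Ht] Hna.
  have [|x Hx Hxu] := Hbelow u Hu _ Ht; first by rewrite inE Hu.
  move: Hx; rewrite inE => /andP[Hx Ha]; exists x; last by rewrite Ha.
  by rewrite inE Hx; apply: (Hin x Hx _).1; rewrite inE Hx.
- move=> b k'; rewrite -botT; apply: filter_restrict => v; rewrite inE => /andP[Hv _] Ha.
  by apply: (Hin v Hv _).2; rewrite inE Hv.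
Qed.

Lemma simulate j : forall p S, (p + j <= tA)%N -> banded d.+1 S lam a k.+1 ->
  destroyer_wins j (bottom S lam a) (shift p (odd_entries r)) ->
  destroyer_wins (2 * j + tB) S (shift (2 * p) r).
Proof.
have no_bottom p S t : (p <= tA)%N -> (tB <= t)%N -> banded d.+1 S lam a k.+1 ->
    bottom S lam a = set0 -> destroyer_wins t S (shift (2 * p) r).
  by move=> Hp Ht HS E; apply: wins_mono Ht (upper_wins _ (banded_raise HS E)); lia.
elim: j => [|j IH] p S Hpj HS; first by case=> // E; apply: no_bottom E => //; lia.
case=> [E|Hmove]; first by apply: no_bottom E => //; lia.
(* The bottom move, a deletion being paired with the trivial layering. *)
have [mu Hmu] : exists mu, is_layering (bottom S lam a) mu /\
  (destroyer_wins j (del_min (bottom S lam a)) (shift p.+1 (odd_entries r)) \/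
   forall b k', (k' <= r (2 * p).+1)%N -> destroyer_wins j
     (restrict_to (bottom S lam a) mu b k') (shift p.+1 (odd_entries r))).
  case: Hmove => [Hdel|[mu [Hmu Hw]]].
    exists (fun _ => 0%R); split; first by move=> u v _ _ _; rewrite subrr.
    by left; apply: wins_ext Hdel => i; rewrite tail_shift.
  exists mu; split=> //; right=> b k' Hk; apply: wins_ext (Hw b k' _) => [i|].
    by rewrite tail_shift.
  by rewrite /seq_head /shift /odd_entries addn0.
case: Hmu => Hmu Hnext.
have [typ [ext [Hsep HD Hext Edel Erestr]]] := attached_split HS Hmu.
have -> : (2 * j.+1 + tB = (2 * j + tB).+2)%N by lia.
have IHT (T : {set 'I_(og_n G)}) : T \subset [set v in S | typ v] ->
    destroyer_wins j (bottom T lam a) (shift p.+1 (odd_entries r)) ->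
    destroyer_wins (2 * j + tB) T (seq_tail (seq_tail (shift (2 * p) r))).
  move=> sub HT; apply: wins_ext (IH p.+1 T _ _ HT) => [i||]; first by rewrite tail2_shift.
  - lia.
  - apply: banded_sub HS; apply: subset_trans sub _.
    by apply/subsetP => v; rewrite inE => /andP[].
apply: (wins_split Hsep); last first.
  apply: wins_ext (fun i => esym (tail_shift _ _ i)) _.
  by apply: wins_mono (upper_wins _ HD); lia.
case: Hnext => [Hdel|Hw].
  by apply: wins_delete; apply: IHT; [apply: del_min_sub | rewrite Edel].
apply: (wins_restrict Hext) => b k' Hk; apply: IHT; first exact: restrict_sub.
by rewrite Erestr; apply: Hw; rewrite /seq_head /seq_tail /shift addn1 in Hk.
Qed.

End Simulation.

(* Inner induction step: k+1 layers are reduced to k layers by simulating a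
   bottom-layer strategy (Simulation); the bound tB for k layers is taken
   uniformly over the finitely many shifts of r at which it is invoked. *)
Lemma band_wins_step d k : deg_wins d -> band_wins d.+1 k -> band_wins d.+1 k.+1.
Proof.
move=> Hdeg Hband r; have [tA HA] := Hdeg (odd_entries r).
have [tB HB] := uniform_bound (P := fun s t => forall G, chordal G ->
    forall S lam a, banded d.+1 S lam a k -> destroyer_wins t S (shift s r))
  (fun s t t' Ht Htt' G HG S lam a HS => wins_mono Htt' (Ht G HG S lam a HS))
  (fun s => Hband (shift s r)) (2 * tA + 1).
exists (2 * tA + tB) => G HG S lam a HS.
have upper_wins s S' : (s <= 2 * tA + 1)%N -> banded d.+1 S' lam (a + 1) k ->
    destroyer_wins tB S' (shift s r).
  by move=> Hs; apply: HB.
apply: wins_ext (simulate HG upper_wins (p := 0) _ HS _) => [i||].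
- by rewrite /shift muln0.
- by rewrite add0n.
- by apply: wins_ext (HA G HG _ (bottom_deg HS)) => i; rewrite /shift.
Qed.

Lemma band_wins_all d k : deg_wins d -> band_wins d.+1 k.
Proof.
by move=> Hdeg; elim: k => [|k IH]; [apply: band_wins0 | apply: band_wins_step].
Qed.

(* Outer induction step: Destroyer first restricts to at most head r
   consecutive layers of the breadth-first layering, which is graded and
   anchored, leaving a banded state with at most head r layers. *)
Lemma deg_wins_step d : deg_wins d -> deg_wins d.+1.
Proof.
move=> Hdeg r.
have [t Ht] := uniform_bound (P := fun k t => forall G, chordal G ->
    forall S lam a, banded d.+1 S lam a k -> destroyer_wins t S (seq_tail r))
  (fun k t t' Ht Htt' G HG S lam a HS => wins_mono Htt' (Ht G HG S lam a HS))
  (fun k => band_wins_all k Hdeg (seq_tail r)) (seq_head r).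
exists t.+1 => G HG S HS; have [lam [Hgr Hanc]] := bfs_layering S HG.
have Hgraded : graded d.+1 S lam.
  split=> // v Hv Hd; apply: Hanc Hv _.
  by rewrite -card_gt0; apply: leq_trans Hd.
apply: (wins_restrict (left_graded_layering Hgr)) => b k Hk.
apply: (Ht k Hk G HG _ lam b); split.
  exact: graded_sub (restrict_sub _ _ _ _) Hgraded.
by move=> v; rewrite inE => /andP[].
Qed.

Lemma deg_wins_all d : deg_wins d.
Proof. by elim: d => [|d IH]; [apply: deg_wins0 | apply: deg_wins_step]. Qed.

(* The main theorem: the left-degree of a
   vertex is its number of left neighbours in the whole vertex set. *)
Theorem mainTheorem9 (d : nat) : baker_class (class_T d).
Proof.
move=> r _; have [t Ht] := deg_wins_all d r; exists t => G [HG Hdeg].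
apply: (Ht G HG) => v _.
have -> : left_nbrs [set: 'I_(og_n G)] v = [set u | left_nbr v u].
  by apply/setP => u; rewrite !inE.
exact: Hdeg.
Qed.
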